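(* Every jewel and every pyramid contains an induced subgraph isomorphic to $C_5$, to the bull, or to an anchor.
   Context: All graphs are finite and simple. The bull is the graph consisting of a triangle with two disjoint pendant edges. An anchor is a six-vertex graph consisting of a 4-vertex induced path $P$, a vertex $c$ adjacent to all vertices of $P$, and a vertex $a$ adjacent to no vertex of $P$ (with $a,c$ either adjacent or not). A path $p_1-\dots-p_k$ is a sequence of distinct vertices with $p_i$ adjacent to $p_j$ iff $|i-j|=1$; its ends are $p_1,p_k$. A pyramid is a graph formed by the union of a triangle $\{b_1,b_2,b_3\}$, a fourth vertex $a$, and three paths $P_1,P_2,P_3$ such that: for $i=1,2,3$, $P_i$ has ends $a$ and $b_i$; for $1\le i<j\le3$, $a$ is the only vertex in both $P_i$ and $P_j$, and $b_ib_j$ is the only edge between $V(P_i)\setminus\{a\}$ and $V(P_j)\setminus\{a\}$; and $a$ is adjacent to at most one of $b_1,b_2,b_3$. A jewel is a graph $H$ with vertex set $\{v_1,\dots,v_5\}\cup F$ such that $H[F]$ is connected, $v_1v_2,v_2v_3,v_3v_4,v_4v_5,v_5v_1$ are edges, $v_1v_3,v_2v_4,v_1v_4$ are non-edges, $v_2,v_3,v_5$ have no neighbours in $F$, and each of $v_1,v_4$ has a neighbour in $F$. *)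

(* Simple finite graphs: T : finType with a symmetric,
   irreflexive adjacency relation e : rel T. *)
From mathcomp Require Import all_boot.
Set Implicit Arguments. Unset Strict Implicit. Unset Printing Implicit Defensive.

Section Graphs.
Variables (T : finType) (e : rel T).

Definition has_induced (k : nat) (adjH : rel 'I_k) : Prop :=
  exists f : 'I_k -> T, injective f /\ forall i j, e (f i) (f j) = adjH i j.

Definition induced_connected (F : {set T}) : Prop :=
  F != set0 /\
  forall x y, x \in F -> y \in F ->
    connect [rel u v | [&& e u v, u \in F & v \in F]] x y.

(* Induced path p_1 - ... - p_k as a sequence of distinct vertices with
   p_i adjacent to p_j iff |i - j| = 1 (the default x0 of nth is irrelevant). *)
Definition induced_path (s : seq T) : Prop :=
  uniq s /\
  forall (x0 : T) i j, i < size s -> j < size s ->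
    e (nth x0 s i) (nth x0 s j) = (i == j.+1) || (j == i.+1).

Definition is_jewel : Prop :=
  exists (v1 v2 v3 v4 v5 : T) (F : {set T}),
    [/\ uniq [:: v1; v2; v3; v4; v5],
        (forall x, (x \in F) || (x \in [:: v1; v2; v3; v4; v5])),
        (forall x, x \in F -> x \notin [:: v1; v2; v3; v4; v5]) &
        induced_connected F] /\
    [/\ [&& e v1 v2, e v2 v3, e v3 v4, e v4 v5 & e v5 v1],
        [&& ~~ e v1 v3, ~~ e v2 v4 & ~~ e v1 v4],
        (forall x, x \in F -> [&& ~~ e v2 x, ~~ e v3 x & ~~ e v5 x]),
        (exists2 x, x \in F & e v1 x) &
        (exists2 x, x \in F & e v4 x)].

Definition is_pyramid : Prop :=
  exists (a b1 b2 b3 : T) (P1 P2 P3 : seq T),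
    let P := [:: P1; P2; P3] in
    let b := [:: b1; b2; b3] in
    [/\ [&& e b1 b2, e b2 b3 & e b1 b3],
        (forall i, i < 3 -> [/\ induced_path (nth [::] P i),
                                 nth [::] P i != [::],
                                 head b1 (nth [::] P i) = a &
                                 last a (nth [::] P i) = nth a b i]),
        (forall x, has (fun s => x \in s) P) &
        count (e a) b <= 1] /\
    (forall i j x, i < 3 -> j < 3 -> i != j ->
          x \in nth [::] P i -> x \in nth [::] P j -> x = a) /\
    (forall i j x y, i < 3 -> j < 3 -> i != j ->
          x \in nth [::] P i -> y \in nth [::] P j -> x != a -> y != a ->
          e x y -> (x == nth a b i) && (y == nth a b j)).

End Graphs.

Definition adj_of {k : nat} (E : seq (nat * nat)) : rel 'I_k :=
  fun i j => ((nat_of_ord i, nat_of_ord j) \in E) || ((nat_of_ord j, nat_of_ord i) \in E).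

Definition C5 : rel 'I_5 := adj_of [:: (0,1); (1,2); (2,3); (3,4); (4,0)].

Definition bull : rel 'I_5 := adj_of [:: (0,1); (1,2); (0,2); (0,3); (1,4)].

(* anchor: induced path 0-1-2-3, c = 4 adjacent to 0,1,2,3, a = 5 adjacent to
   none of 0..3; a and c adjacent iff ac = true. *)
Definition anchor (ac : bool) : rel 'I_6 :=
  adj_of ([:: (0,1); (1,2); (2,3); (4,0); (4,1); (4,2); (4,3)]
             ++ (if ac then [:: (4,5)] else [::])).

(* In a jewel the only possible chords of the 5-cycle v1 v2 v3 v4 v5 are v2v5
   and v3v5; without them the cycle is an induced C5.  A chord v2v5 together
   with a neighbour x of v1 in F gives either the induced C5 x v1 v2 v3 v4 (when
   x sees v4) or a bull on the triangle v1 v5 v2 with pendant edges v1x and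
   v5v4; a chord v3v5 is the mirror image, using a neighbour of v4 in F.
   In a pyramid, a misses two of b1, b2, b3, say bi and bj; their predecessors
   on Pi and Pj are pendant to the triangle b1 b2 b3, giving a bull. *)

From mathcomp Require Import all_boot.
Set Implicit Arguments. Unset Strict Implicit. Unset Printing Implicit Defensive.

Definition adjN (E : seq (nat * nat)) : rel nat :=
  fun i j => ((i, j) \in E) || ((j, i) \in E).

(* Indexed by nat rather than 'I_k so that it can be decided by evaluation:
   enumerating 'I_k does not reduce. *)
Definition twin_free k (r : rel nat) : bool :=
  all2rel (fun i j => (i == j) || has (fun l => r i l != r j l) (iota 0 k))
          (iota 0 k).

Lemma last_mem (A : eqType) (x : A) (s : seq A) : s != [::] -> last x s \in s.
Proof. by case: s => //= y s _; exact: mem_last. Qed.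

Section InducedSubgraphs.
Variables (T : finType) (e : rel T).
Hypotheses (e_sym : symmetric e) (e_irr : irreflexive e).

(* In a twin-free pattern a vertex is determined by its neighbourhood, so a
   map preserving adjacency and non-adjacency is automatically injective. *)
Lemma has_induced_of_twin_free k (E : seq (nat * nat)) (f : 'I_k -> T) :
  twin_free k (adjN E) -> (forall i j, e (f i) (f j) = adj_of E i j) ->
  has_induced e (@adj_of k E).
Proof.
move=> /allrelP twf f_adj; exists f; split=> // i j fij; apply/val_inj/eqP.
have in_range (m : 'I_k) : nat_of_ord m \in iota 0 k by rewrite mem_iota ltn_ord.
have /orP[// | /hasP[l]] := twf i j (in_range i) (in_range j).
rewrite mem_iota add0n => /= lt_lk.
have same_nbr : adjN E i l = adjN E j l.
  by have := f_adj j (Ordinal lt_lk); rewrite -fij f_adj; apply.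
by rewrite same_nbr eqxx.
Qed.

Ltac check_pairs5 :=
  do 2 case=> [[|[|[|[|[|?]]]]] ?] //=; rewrite /adj_of /= ?e_irr //;
  first [ done | exact/negbTE | by rewrite e_sym | by rewrite e_sym; exact/negbTE ].

Lemma induced_C5 v1 v2 v3 v4 v5 :
  e v1 v2 -> e v2 v3 -> e v3 v4 -> e v4 v5 -> e v5 v1 ->
  ~~ e v1 v3 -> ~~ e v1 v4 -> ~~ e v2 v4 -> ~~ e v2 v5 -> ~~ e v3 v5 ->
  has_induced e C5.
Proof.
move=> *; apply: (has_induced_of_twin_free (f := nth v1 [:: v1; v2; v3; v4; v5])) => //.
check_pairs5.
Qed.

Lemma induced_bull v0 v1 v2 v3 v4 :
  e v0 v1 -> e v1 v2 -> e v0 v2 -> e v0 v3 -> e v1 v4 ->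
  ~~ e v0 v4 -> ~~ e v1 v3 -> ~~ e v2 v3 -> ~~ e v2 v4 -> ~~ e v3 v4 ->
  has_induced e bull.
Proof.
move=> *; apply: (has_induced_of_twin_free (f := nth v0 [:: v0; v1; v2; v3; v4])) => //.
check_pairs5.
Qed.

Lemma C5_or_bull_of_chord v1 v2 v3 v4 v5 x :
  e v1 v2 -> e v2 v3 -> e v3 v4 -> e v4 v5 -> e v5 v1 ->
  ~~ e v1 v3 -> ~~ e v1 v4 -> ~~ e v2 v4 -> e v2 v5 ->
  e v1 x -> ~~ e v2 x -> ~~ e v3 x -> ~~ e v5 x ->
  has_induced e C5 \/ has_induced e bull.
Proof.
move=> e12 e23 e34 e45 e51 n13 n14 n24 e25 e1x n2x n3x n5x.
have [e4x | n4x] := boolP (e v4 x).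
- left; apply: (induced_C5 (v1 := x) (v2 := v1) (v3 := v2) (v4 := v3) (v5 := v4));
    first [done | by rewrite e_sym].
- right; apply: (induced_bull (v0 := v1) (v1 := v5) (v2 := v2) (v3 := x) (v4 := v4));
    first [done | by rewrite e_sym].
Qed.

Lemma jewel_induced_C5_or_bull : is_jewel e -> has_induced e C5 \/ has_induced e bull.
Proof.
move=> [v1 [v2 [v3 [v4 [v5 [F [_ [/and5P[e12 e23 e34 e45 e51] /and3P[n13 n24 n14]
         F_far [x1 x1F e1x1] [x4 x4F e4x4]]]]]]]]].
have /and3P[n2x1 n3x1 n5x1] := F_far x1 x1F.
have /and3P[n2x4 n3x4 n5x4] := F_far x4 x4F.
have [e25 | n25] := boolP (e v2 v5).
  exact: C5_or_bull_of_chord e12 e23 e34 e45 e51 n13 n14 n24 e25 e1x1 n2x1 n3x1 n5x1.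
have [e35 | n35] := boolP (e v3 v5).
  apply: (C5_or_bull_of_chord (v1 := v4) (v2 := v3) (v3 := v2) (v4 := v1) (v5 := v5)
                               (x := x4)); first [done | by rewrite e_sym].
by left; exact: induced_C5 e12 e23 e34 e45 e51 n13 n14 n24 n25 n35.
Qed.

Lemma induced_path_penultimate (P : seq T) d a b :
  [/\ induced_path e P, P != [::], head d P = a & last a P = b] ->
  b != a -> ~~ e a b ->
  exists2 y, y \in P & [/\ y != a, y != b & e y b].
Proof.
move=> [[P_uniq P_adj] P_nil P_head P_last] neq_ba nadj_ab.
have P_first : nth a P 0 = a by case: P P_nil P_head {P_uniq P_adj P_last}.
have P_end : nth a P (size P).-1 = b by rewrite nth_last.
have [m size_P] : exists m, size P = m.+3.
  case size_P: (size P) P_end (P_adj a 0 1) => [|[|[|m]]] //= ends adj01.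
  - by move: P_nil; rewrite -size_eq0 size_P.
  - by move: neq_ba; rewrite -ends P_first eqxx.
  - by move: nadj_ab; rewrite -P_first -ends adj01.
  - by exists m.
rewrite size_P /= in P_end.
have [lt_0 lt_m1 lt_m2] : [/\ 0 < size P, m.+1 < size P & m.+2 < size P].
  by rewrite size_P.
exists (nth a P m.+1); first exact: mem_nth.
split; first by rewrite -{2}P_first nth_uniq.
  by rewrite -P_end nth_uniq // neq_ltn ltnSn.
by rewrite -P_end P_adj //= eqxx orbT.
Qed.

Definition only_edge_between (a : T) (P Q : seq T) (p q : T) : Prop :=
  forall x y, x \in P -> y \in Q -> x != a -> y != a -> e x y -> (x == p) && (y == q).

Lemma only_edge_betweenN a P Q p q x y :
  only_edge_between a P Q p q -> x \in P -> y \in Q -> x != a -> y != a ->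
  (x != p) || (y != q) -> ~~ e x y.
Proof.
move=> PQ xP yQ xa ya; apply: contraL => /(PQ x y xP yQ xa ya).
by rewrite negb_or !negbK.
Qed.

Lemma pyramid_paths_induced_bull a bi bj bk (Pi Pj Pk : seq T) di dj :
  e bi bj -> e bi bk -> e bj bk -> ~~ e a bi -> ~~ e a bj ->
  [/\ induced_path e Pi, Pi != [::], head di Pi = a & last a Pi = bi] ->
  [/\ induced_path e Pj, Pj != [::], head dj Pj = a & last a Pj = bj] ->
  bk \in Pk -> only_edge_between a Pi Pj bi bj ->
  only_edge_between a Pi Pk bi bk -> only_edge_between a Pj Pk bj bk ->
  has_induced e bull.
Proof.
move=> eij eik ejk nai naj Pi_path Pj_path bkPk Sij Sik Sjk.
have bia : bi != a by apply: contraNneq naj => <-.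
have bja : bj != a by apply: contraNneq nai => <-; rewrite e_sym.
have bka : bk != a by apply: contraNneq nai => <-; rewrite e_sym.
have [bi' bi'Pi [bi'a bi'bi ebi'bi]] :=
  induced_path_penultimate Pi_path bia nai.
have [bj' bj'Pj [bj'a bj'bj ebj'bj]] :=
  induced_path_penultimate Pj_path bja naj.
have biPi : bi \in Pi by case: Pi_path => _ Pi_nil _ <-; exact: last_mem.
have bjPj : bj \in Pj by case: Pj_path => _ Pj_nil _ <-; exact: last_mem.
apply: (induced_bull (v3 := bi') (v4 := bj') eij ejk eik).
- by rewrite e_sym.
- by rewrite e_sym.
- by apply: (only_edge_betweenN Sij) => //; rewrite bj'bj orbT.
- by rewrite e_sym; apply: (only_edge_betweenN Sij) => //; rewrite bi'bi.
- by rewrite e_sym; apply: (only_edge_betweenN Sik) => //; rewrite bi'bi.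
- by rewrite e_sym; apply: (only_edge_betweenN Sjk) => //; rewrite bj'bj.
- by apply: (only_edge_betweenN Sij) => //; rewrite bi'bi.
Qed.

Lemma pyramid_induced_bull : is_pyramid e -> has_induced e bull.
Proof.
move=> [a [b1 [b2 [b3 [P1 [P2 [P3 [[/and3P[e12 e23 e13] P_path _ a_deg] [_ sole]]]]]]]]].
have /= P1_path := P_path 0 isT; have /= P2_path := P_path 1 isT.
have /= P3_path := P_path 2 isT.
have b1P1 : b1 \in P1 by case: P1_path => _ P1_nil _ <-; exact: last_mem.
have b2P2 : b2 \in P2 by case: P2_path => _ P2_nil _ <-; exact: last_mem.
have b3P3 : b3 \in P3 by case: P3_path => _ P3_nil _ <-; exact: last_mem.
have sole_edge i j : i < 3 -> j < 3 -> i != j ->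
    only_edge_between a (nth [::] [:: P1; P2; P3] i) (nth [::] [:: P1; P2; P3] j)
                        (nth a [:: b1; b2; b3] i) (nth a [:: b1; b2; b3] j).
  by move=> ? ? ? x y; apply: sole.
have /or3P[/andP[n1 n2] | /andP[n1 n3] | /andP[n2 n3]] :
    [|| ~~ e a b1 && ~~ e a b2, ~~ e a b1 && ~~ e a b3 | ~~ e a b2 && ~~ e a b3].
  by move: a_deg => /=; case: (e a b1); case: (e a b2); case: (e a b3).
- exact: pyramid_paths_induced_bull e12 e13 e23 n1 n2 P1_path P2_path b3P3
    (sole_edge 0 1 isT isT isT) (sole_edge 0 2 isT isT isT) (sole_edge 1 2 isT isT isT).
- have e32 : e b3 b2 by rewrite e_sym.
  exact: pyramid_paths_induced_bull e13 e12 e32 n1 n3 P1_path P3_path b2P2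
    (sole_edge 0 2 isT isT isT) (sole_edge 0 1 isT isT isT) (sole_edge 2 1 isT isT isT).
- have [e21 e31] : e b2 b1 /\ e b3 b1 by rewrite ![e _ b1]e_sym.
  exact: pyramid_paths_induced_bull e23 e21 e31 n2 n3 P2_path P3_path b1P1
    (sole_edge 1 2 isT isT isT) (sole_edge 1 0 isT isT isT) (sole_edge 2 0 isT isT isT).
Qed.

End InducedSubgraphs.

Theorem theorem1p6 (T : finType) (e : rel T)
    (e_sym : symmetric e) (e_irr : irreflexive e) :
  is_jewel e \/ is_pyramid e ->
  has_induced e C5 \/ has_induced e bull \/ exists ac, has_induced e (anchor ac).
Proof.
case=> [/(jewel_induced_C5_or_bull e_sym e_irr) [] | /(pyramid_induced_bull e_sym e_irr)];
  tauto.
Qed.
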